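(* Let $M$ be a tabular MDP with finite $\mathcal S,\mathcal A$, transition model $P$, and reward $r(\cdot;\theta^* )$ with $|r(s,a;\theta^* )|\le R_{\max}$. Let $\gamma^*,\tilde\gamma\in(0,1)$ be two discount factors, and let $Q^*,\tilde Q$ be the fixed points of the soft Bellman update using discount $\gamma^*$ and $\tilde\gamma$ respectively, with policies $\pi^*(a\mid s;\theta^* )\propto\exp(Q^*(s,a;\theta^* ))$ and $\tilde\pi(a\mid s;\theta^* )\propto\exp(\tilde Q(s,a;\theta^* ))$. Then $$\mathbb E_{s\sim w^*}\big[D_{\mathrm{KL}}(\pi^*(\cdot\mid s;\theta^* )\,\|\,\tilde\pi(\cdot\mid s;\theta^* ))\big]\le\frac{2|\mathcal A|R_{\max}}{(1-\tilde\gamma)(1-\gamma^* )}\,|\tilde\gamma-\gamma^*| .$$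
   Context: The soft Bellman update with transition model $P$ and discount $\gamma$ is $Q(s,a;\theta)=r(s,a;\theta)+\gamma\sum_{s'}P(s'\mid s,a)V(s';\theta)$, $V(s;\theta)=\log\sum_{a\in\mathcal A}\exp(Q(s,a;\theta))$. $w^*$ is the discounted stationary state distribution of $\pi^*$ (under the true MDP). *)

From mathcomp Require Import all_boot all_order all_algebra.
From mathcomp Require Import all_classical all_reals all_analysis.
Set Implicit Arguments. Unset Strict Implicit. Unset Printing Implicit Defensive.
Import Order.TTheory GRing.Theory Num.Theory.
Local Open Scope ring_scope.

Section MDP.
Variables (R : realType) (S A : finType).

(* P s a s' = P(s' | s, a) is a Markov transition kernel *)
Definition transition_kernel (P : S -> A -> S -> R) : Prop :=
  (forall s a s', 0 <= P s a s') /\ (forall s a, \sum_(s' : S) P s a s' = 1).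

Definition state_distribution (mu : S -> R) : Prop :=
  (forall s, 0 <= mu s) /\ \sum_(s : S) mu s = 1.

Definition softV (Q : S -> A -> R) (s : S) : R :=
  ln (\sum_(a : A) expR (Q s a)).

Definition soft_bellman_fixed (P : S -> A -> S -> R) (r : S -> A -> R) (g : R)
    (Q : S -> A -> R) : Prop :=
  forall s a, Q s a = r s a + g * \sum_(s' : S) P s a s' * softV Q s'.

Definition softmax_policy (Q : S -> A -> R) (s : S) (a : A) : R :=
  expR (Q s a) / \sum_(b : A) expR (Q s b).

Definition KL (p q : A -> R) : R :=
  \sum_(a : A) p a * ln (p a / q a).

(* w is the discounted stationary state distribution of policy pi
   (initial distribution mu0, discount g) under kernel P, i.e. the
   (unique) solution of w = (1-g) mu0 + g * P_pi^T w, equivalently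
   w(s) = (1-g) sum_t g^t Pr(s_t = s). *)
Definition discounted_state_dist (P : S -> A -> S -> R) (mu0 : S -> R) (g : R)
    (pi : S -> A -> R) (w : S -> R) : Prop :=
  forall s', w s' = (1 - g) * mu0 s'
                    + g * \sum_(s : S) w s * \sum_(a : A) pi s a * P s a s'.

End MDP.

From mathcomp Require Import all_boot all_order all_algebra.
From mathcomp Require Import all_classical all_reals all_analysis.
From mathcomp Require Import lra ring.
Set Implicit Arguments. Unset Strict Implicit. Unset Printing Implicit Defensive.
Import Order.TTheory GRing.Theory Num.Theory.
Local Open Scope ring_scope.

(* Write Vs = softV Qstar, Vt = softV Qtilde and
   D = Qstar - Qtilde (discounts gs = gstar, gt = gtilde).
   1. Log-sum-exp is 1-Lipschitz for the sup norm: if f <= h + c pointwise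
      then log sum exp f <= log sum exp h + c.  Hence Vs s - Vt s always
      lies between the minimum and the maximum of D(s, .).
   2. Means of f under two distributions differ by at most the oscillation
      of f.  With step 1 and the Bellman equation this gives the span bound
      Vs s - Vs s' <= 2 Rmax / (1 - gs), and, writing
      D = (gs - gt) P Vs + gt P (Vs - Vt), the contraction estimate
      D p - D p' <= |gt - gs| span(Vs) / (1 - gt).
   3. The KL divergence between the softmax policies of Qstar and Qtilde at
      a state s is sum_a pi(a) (D(s,a) - (Vs s - Vt s)), hence at most the
      oscillation of D(s, .).
   4. The discounted state distribution w is a probability distribution,
      so averaging the pointwise bound of step 3 over w concludes; the
      factor |A| >= 1 of the statement is only slack. *)

Lemma ex_extrema (R : realType) (I : finType) (i0 : I) (F : I -> R) :
  exists imin imax, forall j, F imin <= F j <= F imax.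
Proof.
case: (@arg_minP _ R I i0 xpredT F isT) => imin _ Hmin.
case: (@arg_maxP _ R I i0 xpredT F isT) => imax _ Hmax.
exists imin, imax => j.
by rewrite Hmin //=; exact: Hmax.
Qed.

Section LogSumExp.
Variables (R : realType) (I : finType).

Lemma sumexp_gt0 (i0 : I) (f : I -> R) : 0 < \sum_i expR (f i).
Proof.
apply: (lt_le_trans (expR_gt0 (f i0))).
by rewrite (bigD1 i0) //= lerDl sumr_ge0 // => i _; exact/ltW/expR_gt0.
Qed.

Lemma ln_sumexp_shift (i0 : I) (f h : I -> R) (c : R) :
  (forall i, f i <= h i + c) ->
  ln (\sum_i expR (f i)) <= ln (\sum_i expR (h i)) + c.
Proof.
move=> Hfh; rewrite -[in X in _ <= X](expRK c) -lnM ?posrE ?expR_gt0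
  ?(sumexp_gt0 i0) // ler_ln ?posrE ?mulr_gt0 ?expR_gt0 ?(sumexp_gt0 i0) //.
by rewrite mulr_suml; apply: ler_sum => i _; rewrite -expRD ler_expR.
Qed.

End LogSumExp.

Definition expect {R : realType} {I : finType} (p f : I -> R) : R :=
  \sum_i p i * f i.

(* Two means of f differ by at most an upper bound on its oscillation:
   E_p f - E_q f = sum_(i,j) p i q j (f i - f j). *)
Lemma expect_gap (R : realType) (I : finType) (p q f : I -> R) (B : R) :
  state_distribution p -> state_distribution q ->
  (forall i j, f i - f j <= B) -> expect p f - expect q f <= B.
Proof.
move=> [p0 p1] [q0 q1] HB.
have -> : expect p f = \sum_i \sum_j p i * q j * f i.
  apply: eq_bigr => i _; rewrite -[LHS]mulr1 -q1 mulr_sumr.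
  by apply: eq_bigr => j _; ring.
have -> : expect q f = \sum_i \sum_j p i * q j * f j.
  rewrite exchange_big; apply: eq_bigr => j _; rewrite -[LHS]mul1r -p1 mulr_suml.
  by apply: eq_bigr => i _; ring.
rewrite -sumrB; under eq_bigr do rewrite -sumrB.
apply: (@le_trans _ _ (\sum_i \sum_j p i * q j * B)).
  by do 2![apply: ler_sum => ? _]; rewrite -mulrBr ler_wpM2l ?mulr_ge0.
rewrite (eq_bigr (fun i => p i * B)) -?mulr_suml ?p1 ?mul1r //.
by move=> i _; rewrite -mulr_suml -mulr_sumr q1 mulr1.
Qed.

Lemma expectB (R : realType) (I : finType) (p f h : I -> R) :
  expect p (fun i => f i - h i) = expect p f - expect p h.
Proof. by rewrite /expect -sumrB; apply: eq_bigr => i _; rewrite mulrBr. Qed.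

Section Softmax.
Variables (R : realType) (S A : finType) (a0 : A).
Implicit Types (Q : S -> A -> R) (s : S).

Lemma softV_gap Q1 Q2 s1 s2 (c : R) :
  (forall a, Q1 s1 a - Q2 s2 a <= c) -> softV Q1 s1 - softV Q2 s2 <= c.
Proof.
move=> Hc; suff : softV Q1 s1 <= softV Q2 s2 + c by lra.
by apply: (ln_sumexp_shift a0) => a; have := Hc a; lra.
Qed.

Lemma softmaxE Q s a : softmax_policy Q s a = expR (Q s a - softV Q s).
Proof. by rewrite /softmax_policy /softV expRB lnK // posrE (sumexp_gt0 a0). Qed.

Lemma softmax_distribution Q s : state_distribution (softmax_policy Q s).
Proof.
split=> [a|]; first by rewrite softmaxE ltW ?expR_gt0.
by rewrite /softmax_policy -mulr_suml divff // gt_eqF ?(sumexp_gt0 a0).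
Qed.

Lemma KL_softmax_le Q1 Q2 s (lo hi : R) :
  (forall a, lo <= Q1 s a - Q2 s a <= hi) ->
  KL (softmax_policy Q1 s) (softmax_policy Q2 s) <= hi - lo.
Proof.
move=> Hb; have [pi0 pi1] := softmax_distribution Q1 s.
have HV : softV Q2 s - softV Q1 s <= - lo.
  by apply: softV_gap => a; have /andP[+ _] := Hb a; lra.
rewrite /KL -[X in _ <= X]mul1r -pi1 mulr_suml.
apply: ler_sum => a _; rewrite ler_wpM2l //.
rewrite !softmaxE -expRB expRK.
by have /andP[_] := Hb a; lra.
Qed.

End Softmax.

Section DiscountedStateDistribution.
Variables (R : realType) (I : finType) (K : I -> I -> R) (mu0 w : I -> R) (g : R).
Hypothesis K_stochastic : forall i, state_distribution (K i).
Hypothesis mu0_distribution : state_distribution mu0.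
Hypothesis g_range : 0 <= g < 1.
Hypothesis w_fixed : forall j, w j = (1 - g) * mu0 j + g * \sum_i w i * K i j.

(* Summing the fixed-point equation: sum w = (1 - g) + g sum w. *)
Lemma discounted_fixed_point_sum : \sum_i w i = 1.
Proof.
have [_ m1] := mu0_distribution; have /andP[_ g1] := g_range.
have Hsum : \sum_i w i = (1 - g) + g * \sum_i w i.
  rewrite {1}(eq_bigr _ (fun j _ => w_fixed j)) big_split /= -mulr_sumr m1 mulr1.
  rewrite -mulr_sumr exchange_big /=; congr (_ + g * _); apply: eq_bigr => i _.
  by rewrite -mulr_sumr (proj2 (K_stochastic i)) mulr1.
have : (1 - g) * (\sum_i w i - 1) = 0 by rewrite mulrBr mulr1 mulrBl mul1r {1}Hsum; ring.
by move/eqP; rewrite mulf_eq0 subr_eq0 gt_eqF ?subr_gt0 //= subr_eq0 => /eqP.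
Qed.

(* The total negative mass X of w satisfies g X <= X, hence X >= 0,
   so w has no negative entry. *)
Lemma discounted_fixed_point_ge0 i : 0 <= w i.
Proof.
have [m0 _] := mu0_distribution; have /andP[g0 g1] := g_range.
set X := \sum_(j | w j < 0) w j.
set k := fun i => \sum_(j | w j < 0) K i j.
have k_range j : 0 <= k j <= 1.
  have [K0 K1] := K_stochastic j.
  rewrite sumr_ge0 //= -K1 [leRHS](bigID (fun j => w j < 0)) /= lerDl.
  exact: sumr_ge0.
have X_le : X <= \sum_j w j * k j.
  rewrite /X big_mkcond /=; apply: ler_sum => j _.
  have /andP[k0 k1] := k_range j.
  case: ifP => [wj_lt0 | /negbT]; last by rewrite -leNgt => /mulr_ge0; apply.
  by rewrite -[leLHS]mulr1 ler_wnM2l // ltW.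
have X_ge : g * \sum_j w j * k j <= X.
  rewrite mulr_sumr /k; under eq_bigr do rewrite !mulr_sumr.
  rewrite exchange_big /X; apply: ler_sum => j _.
  by rewrite w_fixed -mulr_sumr lerDr mulr_ge0 // subr_ge0 ltW.
have X_ge0 : 0 <= X.
  have : 0 <= (1 - g) * X by rewrite mulrBl mul1r subr_ge0 (le_trans _ X_ge) // ler_wpM2l.
  by rewrite pmulr_rge0 // subr_gt0.
rewrite leNgt; apply/negP => wi_lt0.
have : X <= w i.
  rewrite /X (bigD1 i) //= gerDl; apply: sumr_le0 => j /andP[wj_lt0 _].
  exact: ltW.
lra.
Qed.

End DiscountedStateDistribution.

Lemma discounted_state_dist_distribution (R : realType) (S A : finType)
    (P : S -> A -> S -> R) (mu0 : S -> R) (g : R) (pol : S -> A -> R)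
    (w : S -> R) :
  transition_kernel P -> state_distribution mu0 -> 0 <= g < 1 ->
  (forall s, state_distribution (pol s)) ->
  discounted_state_dist P mu0 g pol w -> state_distribution w.
Proof.
move=> [P0 P1] Hmu0 Hg Hpol Hw.
have K_stochastic s : state_distribution (fun s' => \sum_a pol s a * P s a s').
  have [pol0 pol1] := Hpol s.
  split=> [s'|]; first by apply: sumr_ge0 => a _; rewrite mulr_ge0.
  rewrite exchange_big /= -pol1; apply: eq_bigr => a _.
  by rewrite -mulr_sumr P1 mulr1.
split; first exact: (discounted_fixed_point_ge0 K_stochastic Hmu0 Hg Hw).
exact: (discounted_fixed_point_sum K_stochastic Hmu0 Hg Hw).
Qed.

Section SoftBellman.
Variables (R : realType) (S A : finType) (a0 : A).
Variables (P : S -> A -> S -> R) (r : S -> A -> R) (Rmax : R).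
Hypothesis P_kernel : transition_kernel P.
Hypothesis r_bounded : forall s a, `|r s a| <= Rmax.

Let P_distribution s a : state_distribution (P s a).
Proof. by have [P0 P1] := P_kernel; split. Qed.

(* Step 2a: the soft value function has span at most 2 Rmax / (1 - g),
   since span V <= 2 Rmax + g span V by the Bellman equation. *)
Lemma softV_span (g : R) (Q : S -> A -> R) :
  0 <= g < 1 -> soft_bellman_fixed P r g Q ->
  forall s s', softV Q s - softV Q s' <= 2 * Rmax / (1 - g).
Proof.
move=> /andP[g0 g1] HQ s s'.
have [smin [smax Hext]] := ex_extrema s (softV Q).
set span := softV Q smax - softV Q smin.
have osc i j : softV Q i - softV Q j <= span.
  by have /andP[? ?] := Hext i; have /andP[? ?] := Hext j; rewrite /span; lra.
have span_le : span <= 2 * Rmax + g * span.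
  apply: (softV_gap a0) => a; rewrite !HQ.
  have := expect_gap (P_distribution smax a) (P_distribution smin a) osc.
  move/(ler_wpM2l g0); rewrite mulrBr /expect => Egap.
  by move: (r_bounded smax a) (r_bounded smin a); rewrite !ler_norml; lra.
rewrite ler_pdivlMr ?subr_gt0 //.
apply: (@le_trans _ _ (span * (1 - g))); first by rewrite ler_pM2r ?subr_gt0.
by rewrite mulrBr mulr1; lra.
Qed.

(* Step 2b: contraction estimate for the gap between the soft Q-functions
   of two discounts, D = Qs - Qt = (gs - gt) P Vs + gt P (Vs - Vt). *)
Lemma soft_Q_gap (gs gt B : R) (Qs Qt : S -> A -> R) :
  0 <= gt < 1 -> soft_bellman_fixed P r gs Qs -> soft_bellman_fixed P r gt Qt ->
  (forall s s', softV Qs s - softV Qs s' <= B) ->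
  forall s a s' a',
    (Qs s a - Qt s a) - (Qs s' a' - Qt s' a') <= `|gt - gs| * B / (1 - gt).
Proof.
move=> /andP[gt0 gt1] HQs HQt HB s a s' a'.
set D := fun p : S * A => Qs p.1 p.2 - Qt p.1 p.2.
have [pm [pM HD]] := ex_extrema (s, a) D.
set Dv := fun i => softV Qs i - softV Qt i.
have Dv_osc i j : Dv i - Dv j <= D pM - D pm.
  have up : Dv i <= D pM.
    by apply: (softV_gap a0) => b; have /andP[_] := HD (i, b).
  have lo : softV Qt j - softV Qs j <= - D pm.
    by apply: (softV_gap a0) => b; have /andP[+ _] := HD (j, b); rewrite /D /=; lra.
  by move: up lo; rewrite /Dv /=; lra.
have D_split q : D q = (gs - gt) * expect (P q.1 q.2) (softV Qs)
                       + gt * expect (P q.1 q.2) Dv.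
  by rewrite /D /= HQs HQt expectB /expect; ring.
have Vs_gap q q' : expect (P q.1 q.2) (softV Qs) - expect (P q'.1 q'.2) (softV Qs) <= B.
  exact: expect_gap.
have first_le : (gs - gt) * (expect (P pM.1 pM.2) (softV Qs)
                             - expect (P pm.1 pm.2) (softV Qs)) <= `|gt - gs| * B.
  apply: (le_trans (ler_norm _)); rewrite normrM distrC ler_wpM2l //.
  by rewrite ler_norml Vs_gap andbT lerNl opprB Vs_gap.
have second_le : gt * (expect (P pM.1 pM.2) Dv - expect (P pm.1 pm.2) Dv)
                 <= gt * (D pM - D pm).
  by rewrite ler_wpM2l // expect_gap.
have contraction : (D pM - D pm) * (1 - gt) <= `|gt - gs| * B.
  by move: first_le second_le; rewrite (D_split pM) (D_split pm) !mulrBr; lra.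
rewrite ler_pdivlMr ?subr_gt0 //; apply: le_trans contraction.
rewrite ler_pM2r ?subr_gt0 //.
by move: (HD (s, a)) (HD (s', a')); rewrite /D /= => /andP[? ?] /andP[? ?]; lra.
Qed.

End SoftBellman.

Lemma card_ge1 (R : realType) (A : finType) (a0 : A) : 1 <= #|A|%:R :> R.
Proof. by rewrite ler1n; apply/card_gt0P; exists a0. Qed.

Lemma discount_bound_slack (R : realType) (gs gt Rmax n : R) :
  0 <= gs < 1 -> 0 <= gt < 1 -> 0 <= Rmax -> 1 <= n ->
  `|gt - gs| * (2 * Rmax / (1 - gs)) / (1 - gt)
    <= (2 * n * Rmax) / ((1 - gt) * (1 - gs)) * `|gt - gs|.
Proof.
move=> /andP[_ gs1] /andP[_ gt1] Rmax0 n1.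
have -> : `|gt - gs| * (2 * Rmax / (1 - gs)) / (1 - gt)
          = 2 * Rmax / ((1 - gt) * (1 - gs)) * `|gt - gs|.
  by rewrite invfM; ring.
apply: ler_wpM2r; first exact: normr_ge0.
rewrite ler_pM2r ?invr_gt0 ?mulr_gt0 ?subr_gt0 //.
by rewrite -mulrA ler_pM2l // ler_peMl.
Qed.

Theorem corollary2 (R : realType) (S A : finType)
    (P : S -> A -> S -> R) (r : S -> A -> R) (Rmax : R)
    (gstar gtilde : R) (Qstar Qtilde : S -> A -> R)
    (mu0 w : S -> R) :
  transition_kernel P ->
  (forall s a, `|r s a| <= Rmax) ->
  0 < gstar < 1 -> 0 < gtilde < 1 ->
  soft_bellman_fixed P r gstar Qstar ->
  soft_bellman_fixed P r gtilde Qtilde ->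
  state_distribution mu0 ->
  discounted_state_dist P mu0 gstar (softmax_policy Qstar) w ->
  \sum_(s : S) w s * KL (softmax_policy Qstar s) (softmax_policy Qtilde s)
    <= (2 * #|A|%:R * Rmax) / ((1 - gtilde) * (1 - gstar)) * `|gtilde - gstar|.
Proof.
move=> HP Hr /andP[gs0 gs1] /andP[gt0 gt1] HQs HQt Hmu0 Hw.
(* Without actions both sides vanish; without states mu0 cannot sum to 1. *)
case: (pickP (@predT A)) => [a0 _ | noA]; last first.
  rewrite eq_card0 => [|a]; last by have := noA a.
  rewrite mulr0 !mul0r big1 // => s _; rewrite /KL big1 ?mulr0 // => a.
  by have := noA a.
case: (pickP (@predT S)) => [s0 _ | noS]; last first.
  case: Hmu0 => _; rewrite big1 => [/esym/eqP|s _]; first by rewrite oner_eq0.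
  by have := noS s.
have gs_range : 0 <= gstar < 1 by rewrite ltW.
have gt_range : 0 <= gtilde < 1 by rewrite ltW.
have Rmax0 : 0 <= Rmax := le_trans (normr_ge0 _) (Hr s0 a0).
have [w0 w1] := discounted_state_dist_distribution HP Hmu0 gs_range
                  (softmax_distribution a0 Qstar) Hw.
set C := `|gtilde - gstar| * (2 * Rmax / (1 - gstar)) / (1 - gtilde).
have KL_le s : KL (softmax_policy Qstar s) (softmax_policy Qtilde s) <= C.
  have [amin [amax Hext]] := ex_extrema a0 (fun a => Qstar s a - Qtilde s a).
  apply: le_trans (KL_softmax_le a0 Hext) _.
  have Vs_span := softV_span a0 HP Hr gs_range HQs.
  exact: (soft_Q_gap a0 HP gt_range HQs HQt Vs_span s amax s amin).
apply: le_trans (discount_bound_slack gs_range gt_range Rmax0 (card_ge1 R a0)).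
apply: (@le_trans _ _ (\sum_s w s * C)).
  by apply: ler_sum => s _; rewrite ler_wpM2l.
by rewrite -mulr_suml w1 mul1r.
Qed.
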